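(* Let $K$ be a field, $L$ a right $K$-vector space of dimension $\kappa>1$, and $R$ the endomorphism algebra of $L$. If $\kappa$ is finite, then $R$ has a multiplicative basis but no strong multiplicative basis. If $\kappa$ is infinite, then $R$ has no bounded basis.
   Context: Let $B$ be a $K$-linear basis of a $K$-algebra $R$. For $r\in R$ write $r=\sum_{b\in B} b k_b$, $\mathrm{supp}(r)=\{b\mid k_b\neq 0\}$, $\mathrm{cs}(r)=|\mathrm{supp}(r)|$. $B$ is $k$-bounded ($1\le k<\omega$) if $\mathrm{cs}(bb')\le k$ for all $b,b'\in B$, and bounded if $k$-bounded for some $k$. $B$ is multiplicative if for all $b,b'\in B$ either $bb'=0$ or $bb'\in B$; it is strong multiplicative if $bb'\in B$ for all $b,b'\in B$. *)

From HB Require Import structures.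
From mathcomp Require Import all_boot all_order all_algebra.
Set Implicit Arguments. Unset Strict Implicit. Unset Printing Implicit Defensive.
Import Order.TTheory GRing.Theory Num.Theory.
Local Open Scope ring_scope.

Section Defs.
Variables (K : fieldType) (L : lmodType K).

Definition vec_basis (n : nat) (v : 'I_n -> L) : Prop :=
  (forall c : 'I_n -> K, \sum_(i < n) c i *: v i = 0 -> forall i, c i = 0) /\
  (forall x : L, exists c : 'I_n -> K, x = \sum_(i < n) c i *: v i).

Definition has_dim (n : nat) : Prop := exists v : 'I_n -> L, vec_basis v.

Definition infinite_dim : Prop :=
  forall (n : nat) (v : 'I_n -> L),
    ~ (forall x : L, exists c : 'I_n -> K, x = \sum_(i < n) c i *: v i).

(* elements of R: K-linear maps L -> L; product in R is composition *)
Definition is_endo (f : L -> L) : Prop :=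
  forall (a : K) (x y : L), f (a *: x + y) = a *: f x + f y.

Definition endo_mul (f g : L -> L) : L -> L := fun x => f (g x).

Definition endo_zero : L -> L := fun _ => 0.

Definition endo_comb (n : nat) (f : 'I_n -> (L -> L)) (c : 'I_n -> K) : L -> L :=
  fun x => \sum_(i < n) c i *: f i x.

Definition endo_basis (B : (L -> L) -> Prop) : Prop :=
  (forall b, B b -> is_endo b) /\
  (forall (n : nat) (f : 'I_n -> (L -> L)) (c : 'I_n -> K),
      injective f -> (forall i, B (f i)) ->
      endo_comb f c = endo_zero -> forall i, c i = 0) /\
  (forall r, is_endo r ->
      exists (n : nat) (f : 'I_n -> (L -> L)) (c : 'I_n -> K),
        (forall i, B (f i)) /\ r = endo_comb f c).

(* cs(r) <= k with respect to the basis B: r is a linear combination of at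
   most k elements of B (equivalently |supp(r)| <= k, B being a basis) *)
Definition cs_le (B : (L -> L) -> Prop) (k : nat) (r : L -> L) : Prop :=
  exists (n : nat) (f : 'I_n -> (L -> L)) (c : 'I_n -> K),
    (n <= k)%N /\ (forall i, B (f i)) /\ r = endo_comb f c.

Definition k_bounded (B : (L -> L) -> Prop) (k : nat) : Prop :=
  (1 <= k)%N /\ forall b b', B b -> B b' -> cs_le B k (endo_mul b b').

Definition bounded_basis (B : (L -> L) -> Prop) : Prop :=
  endo_basis B /\ exists k, k_bounded B k.

Definition multiplicative_basis (B : (L -> L) -> Prop) : Prop :=
  endo_basis B /\
  forall b b', B b -> B b' -> endo_mul b b' = endo_zero \/ B (endo_mul b b').

Definition strong_multiplicative_basis (B : (L -> L) -> Prop) : Prop :=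
  endo_basis B /\ forall b b', B b -> B b' -> B (endo_mul b b').

End Defs.

From mathcomp Require Import all_boot all_order all_algebra.
(* [functions] makes [L -> L] a pointwise [lmodType], whose zero is [endo_zero]. *)
From mathcomp Require Import boolp classical_sets functions.
Set Implicit Arguments. Unset Strict Implicit. Unset Printing Implicit Defensive.
Import Order.TTheory GRing.Theory Num.Theory.
Local Open Scope ring_scope.

(* Finite dimension n: the matrix units e_pq = u_q^*(-) u_p form a multiplicative
   basis.  For a strong multiplicative basis B the augmentation (the linear form
   equal to 1 on B) is multiplicative; e_pq e_pq = 0 for p <> q and
   e_pp = e_pq e_qp (this needs n > 1) make it vanish on every e_pq, hence on the
   identity, whereas b = b id for any b in B forces the value 1 there.

   Infinite dimension: an independent sequence (v_i) and, by Zorn's lemma, a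
   complement of its span give coordinate forms g_i and matrix units
   e_ij = g_j(-) v_i.  For a k-bounded basis cs(xy) <= cs(x) cs(y) k, and
   d independent elements always have a combination with support of size >= d.
   Choose such a combination sum_l c_nl e_(n,n+l) with d_n > k n cs(e_nn) terms,
   and one endomorphism D with g_n o D = sum_l c_nl g_(n+l) for every n.  For
   M = cs(D), the product e_MM D = sum_l c_Ml e_(M,M+l) then has support of size
   at least d_M > cs(e_MM) M k, a contradiction. *)

Lemma sum_by_key (V : nmodType) (I T : eqType) (key : I -> T)
    (r : seq I) (F : I -> V) :
  \sum_(i <- r) F i = \sum_(t <- undup (map key r)) \sum_(i <- r | key i == t) F i.
Proof.
under [RHS]eq_bigr do rewrite big_mkcond.
rewrite exchange_big /= [LHS]big_seq [RHS]big_seq; apply: eq_bigr => i ri.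
have keyi : key i \in undup (map key r) by rewrite mem_undup map_f.
rewrite (bigD1_seq _ keyi (undup_uniq _)) /= eqxx big1 ?addr0 // => t.
by rewrite eq_sym => /negPf ->.
Qed.

Lemma exists_neq n (p : 'I_n) : (1 < n)%N -> exists q, p != q.
Proof.
move=> n_gt1; pose i0 := Ordinal (ltnW n_gt1); pose i1 := Ordinal n_gt1.
exists (if p == i0 then i1 else i0).
by have [-> | //] := eqVneq p i0; apply/eqP => /(congr1 val).
Qed.

Section Endomorphisms.
Variables (K : fieldType) (L : lmodType K).
Local Notation E := (L -> L).

Lemma is_endo0 (f : E) : is_endo f -> f 0 = 0.
Proof.
move=> hf; have := hf 1 0 0; rewrite !scale1r addr0 -{1}[f 0]addr0.
by move=> /addrI <-.
Qed.

Lemma is_endoZ (f : E) a x : is_endo f -> f (a *: x) = a *: f x.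
Proof. by move=> hf; rewrite -[a *: x]addr0 hf is_endo0 // addr0. Qed.

Lemma is_endo_sum (f : E) (I : Type) (r : seq I) (F : I -> L) :
  is_endo f -> f (\sum_(i <- r) F i) = \sum_(i <- r) f (F i).
Proof.
move=> hf; apply: (big_morph f _ (is_endo0 hf)) => x y.
by rewrite -[x]scale1r hf !scale1r.
Qed.

Lemma endo_combE n (f : 'I_n -> E) (c : 'I_n -> K) :
  endo_comb f c = \sum_(i < n) c i *: f i.
Proof. by rewrite fct_sumE. Qed.

Lemma endo_mul_suml (I : Type) (r : seq I) (a : I -> K) (f : I -> E) (g : E) :
  endo_mul (\sum_(i <- r) a i *: f i) g = \sum_(i <- r) a i *: endo_mul (f i) g.
Proof. by rewrite /endo_mul !fct_sumE. Qed.

Lemma endo_mul_sumr (I : Type) (r : seq I) (a : I -> K) (f : E) (g : I -> E) :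
  is_endo f ->
  endo_mul f (\sum_(i <- r) a i *: g i) = \sum_(i <- r) a i *: endo_mul f (g i).
Proof.
move=> hf; rewrite fct_sumE /endo_mul; apply/funext => x.
rewrite fct_sumE is_endo_sum //; apply: eq_bigr => i _.
exact: is_endoZ.
Qed.

End Endomorphisms.

Section Combinations.
Variables (K : fieldType) (L : lmodType K).
Local Notation E := (L -> L).
Variable B : E -> Prop.

(* Elements may repeat in [s], so [size s] only bounds [cs]. *)
Definition comb (s : seq (E * K)) : E := \sum_(p <- s) p.2 *: p.1.

Definition expresses (s : seq (E * K)) (r : E) : Prop :=
  (forall p, p \in s -> B p.1) /\ r = comb s.

Definition spanned (r : E) : Prop := exists s, expresses s r.

Definition scale_terms (a : K) (s : seq (E * K)) : seq (E * K) :=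
  [seq (p.1, a * p.2) | p <- s].

Lemma expresses_nil : expresses [::] 0.
Proof. by split=> //; rewrite /comb big_nil. Qed.

Lemma expresses1 b : B b -> expresses [:: (b, 1)] b.
Proof.
by move=> Bb; split=> [p /[!inE] /eqP -> //|]; rewrite /comb big_seq1 scale1r.
Qed.

Lemma expresses_cat s s' x y :
  expresses s x -> expresses s' y -> expresses (s ++ s') (x + y).
Proof.
move=> [Bs ->] [Bs' ->]; split; last by rewrite /comb big_cat.
by move=> p; rewrite mem_cat => /orP[/Bs | /Bs'].
Qed.

Lemma expresses_scale a s x : expresses s x -> expresses (scale_terms a s) (a *: x).
Proof.
move=> [Bs ->]; rewrite /scale_terms; split.
  by move=> _ /mapP[p ps ->]; exact: Bs ps.
by rewrite /comb big_map scaler_sumr; apply: eq_bigr => p _; rewrite scalerA.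
Qed.

Lemma spanned_sum (I : eqType) (r : seq I) (c : I -> K) (X : I -> E) :
  {in r, forall i, spanned (X i)} -> spanned (\sum_(i <- r) c i *: X i).
Proof.
elim: r => [|i r IHr] spX; first by exists [::]; rewrite big_nil; apply: expresses_nil.
have [si hsi] := spX i (mem_head i r).
have [s hs] : spanned (\sum_(j <- r) c j *: X j).
  by apply: IHr => j rj; apply: spX; rewrite inE rj orbT.
exists (scale_terms (c i) si ++ s); rewrite big_cons.
by apply: expresses_cat => //; apply: expresses_scale.
Qed.

Lemma cs_leP N r : cs_le B N r <-> exists2 s, (size s <= N)%N & expresses s r.
Proof.
split=> [[n [f [c [nN [Bf ->]]]]] | [s sN [Bs ->]]].
  exists [seq (f i, c i) | i <- enum 'I_n]; first by rewrite size_map size_enum_ord.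
  split; first by move=> _ /mapP[i _ ->]; apply: Bf.
  by rewrite endo_combE /comb big_map big_enum.
exists (size s), (fun i => (nth (0, 0) s i).1), (fun i => (nth (0, 0) s i).2).
split=> //; split; first by move=> i; apply/Bs/mem_nth.
by rewrite endo_combE /comb (big_nth (0, 0)) big_mkord.
Qed.

Lemma basis_endo b : endo_basis B -> B b -> is_endo b.
Proof. by move=> [endoB _]; apply: endoB. Qed.

Lemma cs_le_spanned N r : cs_le B N r -> spanned r.
Proof. by move=> /cs_leP[s _ hs]; exists s. Qed.

Lemma endo_cs_le r : endo_basis B -> is_endo r -> exists N, cs_le B N r.
Proof. by move=> [_ [_ spanB]] /spanB[n [f [c [Bf ->]]]]; exists n, n, f, c. Qed.

Lemma endo_spanned r : endo_basis B -> is_endo r -> spanned r.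
Proof. by move=> basisB /(endo_cs_le basisB)[N /cs_le_spanned]. Qed.

Lemma endo_basis_inhabited (x : L) : x != 0 -> endo_basis B -> exists b, B b.
Proof.
move=> x_neq0 basisB; have endo_id : is_endo (fun y : L => y) by [].
have [[|p s] [Bs id_s]] := endo_spanned basisB endo_id.
  move/(congr1 (fun f => f x)): id_s; rewrite /comb big_nil => /eqP.
  by rewrite (negPf x_neq0).
by exists p.1; apply: Bs; rewrite mem_head.
Qed.

Lemma cs_le_mono M N r : (M <= N)%N -> cs_le B M r -> cs_le B N r.
Proof.
by move=> MN /cs_leP[s sM hs]; apply/cs_leP; exists s => //; apply: leq_trans MN.
Qed.

Lemma cs_le_sum (I : eqType) (r : seq I) (c : I -> K) (X : I -> E) N :
  {in r, forall i, cs_le B N (X i)} -> cs_le B (size r * N) (\sum_(i <- r) c i *: X i).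
Proof.
elim: r => [|i r IHr] csX.
  by apply/cs_leP; exists [::]; rewrite ?big_nil //; apply: expresses_nil.
have /cs_leP[si siN hsi] := csX i (mem_head i r).
have /cs_leP[s sN hs] : cs_le B (size r * N) (\sum_(j <- r) c j *: X j).
  by apply: IHr => j rj; apply: csX; rewrite inE rj orbT.
apply/cs_leP; exists (scale_terms (c i) si ++ s).
  by rewrite size_cat size_map mulSn leq_add.
by rewrite big_cons; apply: expresses_cat => //; apply: expresses_scale.
Qed.

Lemma cs_le_mul k M N x y : endo_basis B -> k_bounded B k ->
  cs_le B M x -> cs_le B N y -> cs_le B (M * N * k) (endo_mul x y).
Proof.
move=> basisB [_ bdd] /cs_leP[s sM [Bs ->]] /cs_leP[s' sN [Bs' ->]].
apply: (@cs_le_mono (size s * (size s' * k))); first by rewrite mulnA !leq_mul.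
rewrite /comb endo_mul_suml; apply: cs_le_sum => p ps.
rewrite endo_mul_sumr; last exact: basis_endo basisB (Bs p ps).
by apply: cs_le_sum => q qs'; apply: bdd; [apply: Bs | apply: Bs'].
Qed.

End Combinations.

Section Coordinates.
Variables (K : fieldType) (L : lmodType K).
Local Notation E := (L -> L).
Variable B : E -> Prop.
Hypothesis basisB : endo_basis B.

Lemma comb_by_key (s : seq (E * K)) :
  comb s = \sum_(b <- undup (map fst s)) (\sum_(p <- s | p.1 == b) p.2) *: b.
Proof.
rewrite /comb (sum_by_key fst); apply: eq_bigr => b _; rewrite scaler_suml.
by apply: eq_bigr => p /eqP ->.
Qed.

Lemma expresses0_coef s b : expresses B s 0 -> \sum_(p <- s | p.1 == b) p.2 = 0.
Proof.
move=> [Bs s0]; set t := undup (map fst s).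
have [bt | bNt] := boolP (b \in t); last first.
  rewrite big_seq_cond big1 // => p /andP[ps /eqP pb]; case/negP: bNt.
  by rewrite mem_undup -pb map_f.
pose f (j : 'I_(size t)) := nth 0 t j.
have f_inj : injective f.
  by move=> i j /eqP; rewrite nth_uniq ?undup_uniq // => /eqP /val_inj.
have Bf j : B (f j).
  have /mapP[p ps ->] : f j \in map fst s by rewrite -mem_undup mem_nth.
  exact: Bs.
pose c j := \sum_(p <- s | p.1 == f j) p.2.
have comb_f0 : endo_comb f c = @endo_zero K L.
  rewrite endo_combE; apply: etrans (esym s0).
  by rewrite comb_by_key (big_nth 0) big_mkord.
have bi : (index b t < size t)%N by rewrite index_mem.
have := proj1 (proj2 basisB) _ f c f_inj Bf comb_f0 (Ordinal bi).
by rewrite /c /f nth_index.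
Qed.

Definition wsum (w : E -> K) (s : seq (E * K)) : K := \sum_(p <- s) p.2 * w p.1.

Lemma wsum_cat w s s' : wsum w (s ++ s') = wsum w s + wsum w s'.
Proof. exact: big_cat. Qed.

Lemma wsum_scale w a s : wsum w (scale_terms a s) = a * wsum w s.
Proof. by rewrite /wsum big_map mulr_sumr; apply: eq_bigr => p _; rewrite mulrA. Qed.

Lemma expresses0_wsum w s : expresses B s 0 -> wsum w s = 0.
Proof.
move=> s0; rewrite /wsum (sum_by_key fst) big1 // => b _.
rewrite (eq_bigr (fun p => p.2 * w b)) => [|p /eqP -> //].
by rewrite -mulr_suml expresses0_coef ?mul0r.
Qed.

Lemma wsum_unique w s s' r :
  expresses B s r -> expresses B s' r -> wsum w s = wsum w s'.
Proof.
move=> hs hs'; have := expresses_cat hs (expresses_scale (-1) hs').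
rewrite scaleN1r subrr => /(expresses0_wsum w) /eqP.
by rewrite wsum_cat wsum_scale mulN1r subr_eq0 => /eqP.
Qed.

(* The linear extension of the weights [w] on B; it is [0] outside span B. *)
Definition lin_ext (w : E -> K) (r : E) : K :=
  xget 0 (fun k => exists2 s, expresses B s r & k = wsum w s).

Lemma lin_extE w s r : expresses B s r -> lin_ext w r = wsum w s.
Proof.
move=> hs; apply: xget_unique; first by exists s.
by move=> _ [s' hs' ->]; apply: wsum_unique hs' hs.
Qed.

Lemma lin_ext0 w : lin_ext w 0 = 0.
Proof. by rewrite (lin_extE w (expresses_nil B)) /wsum big_nil. Qed.

Lemma lin_extZ w a x : spanned B x -> lin_ext w (a *: x) = a * lin_ext w x.
Proof.
move=> [s hs]; rewrite (lin_extE w (expresses_scale a hs)).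
by rewrite wsum_scale (lin_extE w hs).
Qed.

Lemma lin_ext_sum w (I : eqType) (r : seq I) (c : I -> K) (X : I -> E) :
  {in r, forall i, spanned B (X i)} ->
  lin_ext w (\sum_(i <- r) c i *: X i) = \sum_(i <- r) c i * lin_ext w (X i).
Proof.
elim: r => [|i r IHr] spX; first by rewrite !big_nil lin_ext0.
have spr : {in r, forall j, spanned B (X j)}.
  by move=> j rj; apply: spX; rewrite inE rj orbT.
have [si hsi] := spX i (mem_head i r).
have [s hs] := spanned_sum c spr.
rewrite !big_cons (lin_extE w (expresses_cat (expresses_scale (c i) hsi) hs)).
by rewrite wsum_cat wsum_scale -(lin_extE w hsi) -(lin_extE w hs) IHr.
Qed.

Definition coord (b : E) : E -> K := lin_ext (fun g => (g == b)%:R).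

Lemma coordE s r b : expresses B s r -> coord b r = \sum_(p <- s | p.1 == b) p.2.
Proof.
move=> hs; rewrite /coord (lin_extE _ hs) /wsum [RHS]big_mkcond.
by apply: eq_bigr => p _; case: eqP; rewrite ?mulr1 ?mulr0.
Qed.

Lemma coord_neq0_mem s r b : expresses B s r -> coord b r != 0 -> b \in map fst s.
Proof.
move=> hs; rewrite (coordE _ hs); apply: contraR => bNs.
rewrite big_seq_cond big1 // => p /andP[ps /eqP pb].
by case/negP: bNs; rewrite -pb map_f.
Qed.

Lemma spanned_coord_eq0 r : spanned B r -> (forall b, coord b r = 0) -> r = 0.
Proof.
move=> [s hs] r0; rewrite (proj2 hs) comb_by_key big1 // => b _.
by rewrite -(coordE _ hs) r0 scale0r.
Qed.

Lemma cs_le_coord N r (t : seq E) : uniq t -> (forall b, b \in t -> coord b r != 0) ->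
  cs_le B N r -> (size t <= N)%N.
Proof.
move=> tu tr /cs_leP[s sN hs]; apply: leq_trans sN; rewrite -(size_map fst).
by apply: uniq_leq_size => // b /tr; apply: coord_neq0_mem.
Qed.

End Coordinates.

Lemma row_free_ones_minor (K : fieldType) d m (M : 'M[K]_(d, m)) : row_free M ->
  exists c : 'rV_d,
    exists2 f : 'I_d -> 'I_m, injective f & forall j, (c *m M) 0 (f j) = 1.
Proof.
move=> freeM; have fullMT : row_full M^T by rewrite /row_full mxrank_tr.
set f := fullrankfun fullMT.
have unitC : colsub f M \in unitmx.
  by rewrite -unitmx_tr trmx_mxsub; apply: fullrowsub_unit.
pose c : 'rV_d := const_mx 1 *m invmx (colsub f M).
exists c, f => [|j]; first exact: fullrankfun_inj.
have cC : c *m colsub f M = const_mx 1 by rewrite -mulmxA mulVmx ?mulmx1.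
by move/rowP: cC => /(_ j); rewrite mulmx_colsub !mxE.
Qed.

Section LargeSupport.
Variables (K : fieldType) (L : lmodType K).
Local Notation E := (L -> L).
Variable B : E -> Prop.
Hypothesis basisB : endo_basis B.

Lemma large_support d (X : 'I_d -> E) :
  (forall l, spanned B (X l)) ->
  (forall c : 'I_d -> K, \sum_l c l *: X l = 0 -> forall l, c l = 0) ->
  exists c : 'I_d -> K, forall N, cs_le B N (\sum_l c l *: X l) -> (d <= N)%N.
Proof.
(* The coordinates of the X l on the finitely many basis elements they involve
   form a matrix of rank d; a combination equal to 1 on the columns of an
   invertible d x d minor has d nonzero coordinates. *)
move=> spX freeX; have [S hS] := fin_all_exists spX.
set t := undup (flatten [seq map fst (S l) | l <- enum 'I_d]).
pose M := \matrix_(l < d, j < size t) coord B t`_j (X l).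
have coord_sum (c : 'rV_d) b :
    coord B b (\sum_l c 0 l *: X l) = \sum_l c 0 l * coord B b (X l).
  by apply: (lin_ext_sum basisB) => l _.
have coord_out b l : b \notin t -> coord B b (X l) = 0.
  move=> bNt; apply/eqP; apply: contraNT bNt => /(coord_neq0_mem basisB (hS l)) bS.
  rewrite mem_undup; apply/flattenP; exists (map fst (S l)) => //.
  by apply: map_f; rewrite mem_enum.
have coordM (c : 'rV_d) (j : 'I_(size t)) :
    coord B t`_j (\sum_l c 0 l *: X l) = (c *m M) 0 j.
  by rewrite coord_sum !mxE; apply: eq_bigr => l _; rewrite !mxE.
have freeM : row_free M.
  apply: inj_row_free => c cM0; apply/rowP => i; rewrite mxE.
  apply: (freeX (fun l => c 0 l)); apply: (spanned_coord_eq0 basisB) => [|b].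
    by apply: spanned_sum => l _.
  have [bt | bNt] := boolP (b \in t); last first.
    by rewrite coord_sum big1 // => l _; rewrite coord_out ?mulr0.
  have bi : (index b t < size t)%N by rewrite index_mem.
  by have := coordM c (Ordinal bi); rewrite /= nth_index // cM0 mxE.
have [c [f f_inj cf1]] := row_free_ones_minor freeM.
exists (fun l => c 0 l) => N csN.
rewrite -(size_enum_ord d) -(size_map (fun j => t`_(f j))).
apply: (cs_le_coord basisB _ _ csN) => [|_ /mapP[j _ ->]].
  rewrite map_inj_uniq ?enum_uniq // => i j /eqP.
  by rewrite nth_uniq ?undup_uniq // => /eqP /val_inj /f_inj.
by rewrite coordM cf1 oner_neq0.
Qed.

End LargeSupport.

Section MatrixUnits.
Variables (K : fieldType) (L : lmodType K) (I : eqType).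
Variables (u : I -> L) (g : I -> L -> K).
Hypothesis g_lin : forall i a x y, g i (a *: x + y) = a * g i x + g i y.
Hypothesis g_u : forall i j, g i (u j) = (i == j)%:R.

Definition matrix_unit (p q : I) : L -> L := fun x => g q x *: u p.

Lemma g0 i : g i 0 = 0.
Proof.
by have := g_lin i 1 0 0; rewrite scale1r addr0 mul1r -{1}[g i 0]addr0 => /addrI.
Qed.

Lemma gZ i a x : g i (a *: x) = a * g i x.
Proof. by have := g_lin i a x 0; rewrite !addr0 g0 addr0. Qed.

Lemma g_sum i (J : Type) (r : seq J) (F : J -> L) :
  g i (\sum_(j <- r) F j) = \sum_(j <- r) g i (F j).
Proof.
apply: (big_morph (g i) _ (g0 i)) => x y.
by have := g_lin i 1 x y; rewrite scale1r mul1r.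
Qed.

Lemma u_neq0 i : u i != 0.
Proof.
apply: contra_neq (@oner_neq0 K) => ui0.
by have := g_u i i; rewrite ui0 g0 eqxx => ->.
Qed.

Lemma matrix_unit_endo p q : is_endo (matrix_unit p q).
Proof. by move=> a x y; rewrite /matrix_unit g_lin scalerDl scalerA. Qed.

Lemma matrix_unit_u p q r : matrix_unit p q (u r) = (q == r)%:R *: u p.
Proof. by rewrite /matrix_unit g_u. Qed.

Lemma matrix_unit_coord p q p' q' :
  g p' (matrix_unit p q (u q')) = ((p', q') == (p, q))%:R.
Proof.
rewrite matrix_unit_u gZ g_u xpair_eqE eq_sym [q' == q]eq_sym.
by case: (p' == p); case: (q == q'); rewrite ?mulr1 ?mulr0.
Qed.

Lemma matrix_unit_mul p q p' q' :
  endo_mul (matrix_unit p q) (matrix_unit p' q') = (q == p')%:R *: matrix_unit p q'.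
Proof.
by apply/funext => x; rewrite /endo_mul /matrix_unit /= gZ g_u scalrfctE scalerA mulrC.
Qed.

Lemma matrix_unit_free p d (q : 'I_d -> I) (c : 'I_d -> K) : injective q ->
  \sum_l c l *: matrix_unit p (q l) = 0 -> forall l, c l = 0.
Proof.
move=> q_inj c0 l; have := congr1 (fun f => f (u (q l))) c0.
rewrite fct_sumE /= (bigD1 l) //= big1 => [|k kl]; last first.
  by rewrite scalrfctE /= matrix_unit_u (inj_eq q_inj) (negPf kl) scale0r scaler0.
rewrite scalrfctE /= matrix_unit_u eqxx scale1r addr0 => /eqP.
by rewrite scaler_eq0 (negPf (u_neq0 p)) orbF => /eqP.
Qed.

End MatrixUnits.

Section Augmentation.
Variables (K : fieldType) (L : lmodType K).
Local Notation E := (L -> L).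
Variable B : E -> Prop.
Hypothesis basisB : endo_basis B.
Hypothesis strongB : forall b b', B b -> B b' -> B (endo_mul b b').

Definition aug : E -> K := lin_ext B (fun _ => 1).

Lemma aug_basis b : B b -> aug b = 1.
Proof.
by move=> Bb; rewrite /aug (lin_extE basisB _ (expresses1 Bb)) /wsum big_seq1 mulr1.
Qed.

Lemma aug_mul x y : spanned B x -> spanned B y -> aug (endo_mul x y) = aug x * aug y.
Proof.
move=> [s [Bs ->]] [s' [Bs' ->]].
pose t := [seq (endo_mul p.1 q.1, p.2 * q.2) | p <- s, q <- s'].
have ht : expresses B t (endo_mul (comb s) (comb s')).
  split=> [_ /allpairsP[[p q] [ps qs' ->]] | ].
    exact: strongB (Bs p ps) (Bs' q qs').
  rewrite /comb big_allpairs_dep endo_mul_suml; apply: eq_big_seq => p ps.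
  rewrite endo_mul_sumr; last exact: basis_endo basisB (Bs p ps).
  by rewrite scaler_sumr; apply: eq_bigr => q _; rewrite scalerA.
rewrite /aug (lin_extE basisB _ ht) (lin_extE basisB _ (conj Bs erefl)).
rewrite (lin_extE basisB _ (conj Bs' erefl)) /wsum big_allpairs_dep mulr_suml.
by apply: eq_bigr => p _; rewrite mulr_sumr; apply: eq_bigr => q _; rewrite !mulr1.
Qed.

End Augmentation.

Section FiniteDimension.
Variables (K : fieldType) (L : lmodType K) (n : nat) (u : 'I_n -> L).
Local Notation E := (L -> L).
Hypothesis basis_u : vec_basis u.

Definition vcoord (i : 'I_n) (x : L) : K :=
  xget (fun _ => 0) (fun c => x = \sum_j c j *: u j) i.

Lemma vcoord_expand x : x = \sum_i vcoord i x *: u i.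
Proof. exact: xgetPex (proj2 basis_u x). Qed.

Lemma vcoord_unique x c : x = \sum_i c i *: u i -> forall i, vcoord i x = c i.
Proof.
move=> hx i; have := vcoord_expand x; rewrite {1}hx => /eqP; rewrite -subr_eq0 -sumrB.
under eq_bigr do rewrite -scalerBl.
by move=> /eqP /(proj1 basis_u) /(_ i) /eqP; rewrite subr_eq0 => /eqP.
Qed.

Lemma vcoord_lin i a x y : vcoord i (a *: x + y) = a * vcoord i x + vcoord i y.
Proof.
apply: (vcoord_unique (c := fun j => a * vcoord j x + vcoord j y)).
rewrite [in LHS](vcoord_expand x) [in LHS](vcoord_expand y).
by rewrite scaler_sumr -big_split; apply: eq_bigr => j _; rewrite scalerA scalerDl.
Qed.

Lemma vcoord_u i j : vcoord i (u j) = (i == j)%:R.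
Proof.
apply: (vcoord_unique (c := fun k => (k == j)%:R)).
rewrite (bigD1 j) //= eqxx scale1r big1 ?addr0 // => k /negPf ->.
by rewrite scale0r.
Qed.

Local Notation e := (matrix_unit u vcoord).

Lemma endo_expand (r : E) : is_endo r -> r = \sum_p \sum_q vcoord p (r (u q)) *: e p q.
Proof.
move=> endo_r; apply/funext => x; rewrite exchange_big fct_sumE.
rewrite [in LHS](vcoord_expand x) is_endo_sum //; apply: eq_bigr => q _.
rewrite is_endoZ // [in LHS](vcoord_expand (r (u q))) scaler_sumr fct_sumE.
by apply: eq_bigr => p _; rewrite /matrix_unit !scalrfctE /= !scalerA mulrC.
Qed.

Definition matrix_units (f : E) : Prop := exists p q, f = e p q.

Lemma matrix_units_free m (f : 'I_m -> E) (c : 'I_m -> K) : injective f ->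
  (forall i, matrix_units (f i)) -> endo_comb f c = @endo_zero K L -> forall i, c i = 0.
Proof.
move=> f_inj units_f f0 i0.
have pq_ex i : exists pq : 'I_n * 'I_n, f i = e pq.1 pq.2.
  by have [p [q ->]] := units_f i; exists (p, q).
have [pq hpq] := fin_all_exists pq_ex.
have := congr1 (fun r => vcoord (pq i0).1 (r (u (pq i0).2))) f0.
rewrite endo_combE fct_sumE /= (g_sum vcoord_lin) (bigD1 i0) //= big1 => [|i ii0].
  rewrite scalrfctE /= (gZ vcoord_lin) hpq (matrix_unit_coord vcoord_lin vcoord_u).
  by rewrite -surjective_pairing eqxx mulr1 addr0 (g0 vcoord_lin).
rewrite scalrfctE /= (gZ vcoord_lin) hpq (matrix_unit_coord vcoord_lin vcoord_u).
rewrite -!surjective_pairing; case: eqP => [pqi | _]; last by rewrite mulr0.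
by case/eqP: ii0; apply: f_inj; rewrite !hpq pqi.
Qed.

Lemma matrix_units_basis : endo_basis matrix_units.
Proof.
split; [by move=> _ [p [q ->]]; apply/matrix_unit_endo/vcoord_lin | split].
  exact: @matrix_units_free.
move=> r endo_r; rewrite {1}(endo_expand endo_r).
set s := [seq (e p q, vcoord p (r (u q))) | p <- index_enum 'I_n, q <- index_enum 'I_n].
have [m [f [c [_ [unit_f comb_s]]]]] : cs_le matrix_units (size s) (comb s).
  apply/cs_leP; exists s => //; split=> // _ /allpairsP[[p q] [_ _ ->]].
  by exists p, q.
exists m, f, c; split=> //.
by rewrite -comb_s /comb big_allpairs_dep.
Qed.

Lemma matrix_units_multiplicative : multiplicative_basis matrix_units.
Proof.
split; first exact: matrix_units_basis.
move=> _ _ [p [q ->]] [p' [q' ->]]; rewrite (matrix_unit_mul vcoord_lin vcoord_u).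
by case: eqP => _; [right; exists p, q'; rewrite scale1r | left; rewrite scale0r].
Qed.

Section StrongBasis.
Variable B : E -> Prop.
Hypothesis basisB : endo_basis B.
Hypothesis strongB : forall b b', B b -> B b' -> B (endo_mul b b').

Lemma aug_matrix_unit_mul p q p' q' :
  aug B (e p q) * aug B (e p' q') = (q == p')%:R * aug B (e p q').
Proof.
have sp_e r r' : spanned B (e r r').
  by apply/(endo_spanned basisB)/matrix_unit_endo/vcoord_lin.
rewrite -(aug_mul basisB strongB (sp_e p q) (sp_e p' q')).
by rewrite (matrix_unit_mul vcoord_lin vcoord_u) /aug (lin_extZ basisB _ _ (sp_e p q')).
Qed.

Lemma aug_matrix_unit : (1 < n)%N -> forall p q, aug B (e p q) = 0.
Proof.
have aug_offdiag p q : p != q -> aug B (e p q) = 0.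
  move=> pq; have := aug_matrix_unit_mul p q p q.
  rewrite [q == p]eq_sym (negPf pq) mul0r.
  by move=> /eqP; rewrite mulf_eq0 orbb => /eqP.
move=> n_gt1 p q; have [<- | /aug_offdiag //] := eqVneq p q.
have [r pr] := exists_neq p n_gt1.
by have := aug_matrix_unit_mul p r r p; rewrite aug_offdiag // mul0r eqxx mul1r.
Qed.

Lemma aug_id : (1 < n)%N -> aug B (fun x : L => x) = 0.
Proof.
move=> n_gt1; have -> : (fun x : L => x) = \sum_p 1 *: e p p.
  apply/funext => x; rewrite fct_sumE [LHS]vcoord_expand.
  by apply: eq_bigr => p _; rewrite scale1r.
rewrite /aug (lin_ext_sum basisB) => [|p _]; last first.
  by apply/(endo_spanned basisB)/matrix_unit_endo/vcoord_lin.
by rewrite big1 // => p _; rewrite -/(aug B _) aug_matrix_unit // mulr0.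
Qed.

End StrongBasis.

Lemma no_strong_multiplicative_basis :
  (1 < n)%N -> ~ exists B, @strong_multiplicative_basis K L B.
Proof.
move=> n_gt1 [B [basisB strongB]].
have endo_id : is_endo (fun x : L => x) by [].
have u0_neq0 := u_neq0 vcoord_lin vcoord_u (Ordinal (ltnW n_gt1)).
have [b Bb] := endo_basis_inhabited u0_neq0 basisB.
have := aug_mul basisB strongB (endo_spanned basisB (basis_endo basisB Bb)).
move=> /(_ _ (endo_spanned basisB endo_id)).
rewrite (_ : endo_mul b _ = b) // aug_id // mulr0 (aug_basis basisB Bb).
by move/eqP; rewrite oner_eq0.
Qed.

End FiniteDimension.

Section FreeSequence.
Variables (K : fieldType) (L : lmodType K).
Hypothesis infL : infinite_dim L.

Lemma exists_outside_span (s : seq L) :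
  exists x, forall c : nat -> K, x <> \sum_(i < size s) c i *: s`_i.
Proof.
apply: contrapT => /forallNP noX; apply: (@infL (size s) (fun i => s`_i)) => x.
have /existsNP[c /contrapT xc] := noX x.
by exists (fun i => c i).
Qed.

Definition next_outside (s : seq L) : L :=
  xget 0 (fun x => forall c : nat -> K, x <> \sum_(i < size s) c i *: s`_i).

Fixpoint free_prefix n : seq L :=
  if n is m.+1 then rcons (free_prefix m) (next_outside (free_prefix m)) else [::].

Definition free_seq n : L := next_outside (free_prefix n).

Lemma free_prefixE n : free_prefix n = mkseq free_seq n.
Proof. by elim: n => //= n IHn; rewrite mkseqS -IHn. Qed.

Lemma free_seq_outside n (c : nat -> K) : free_seq n <> \sum_(i < n) c i *: free_seq i.
Proof.
move=> fn; apply: (xgetPex 0 (exists_outside_span (free_prefix n)) c).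
rewrite -/(next_outside _) -/(free_seq n) fn free_prefixE size_mkseq.
by apply: eq_bigr => i _; rewrite nth_mkseq.
Qed.

Lemma free_seq_free n (c : nat -> K) :
  \sum_(i < n) c i *: free_seq i = 0 -> forall i, (i < n)%N -> c i = 0.
Proof.
elim: n => // n IHn; rewrite big_ord_recr /= => sum0.
have cn0 : c n = 0.
  apply/eqP/negP => /negP cn; apply: (@free_seq_outside n (fun i => - (c n)^-1 * c i)).
  apply: (scalerI cn); rewrite scaler_sumr.
  under eq_bigr do rewrite scalerA mulrA mulrN mulfV // mulN1r scaleNr.
  by rewrite sumrN; apply/eqP; rewrite -addr_eq0 addrC sum0.
move=> i; rewrite ltnS leq_eqVlt => /orP[/eqP -> // | ]; apply: IHn.
by move: sum0; rewrite cn0 scale0r addr0.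
Qed.

End FreeSequence.

Section Complement.
Variables (K : fieldType) (L : lmodType K) (v : nat -> L).
Hypothesis v_free :
  forall n (c : nat -> K),
    \sum_(i < n) c i *: v i = 0 -> forall i, (i < n)%N -> c i = 0.

Definition vsum (s : seq K) : L := \sum_(i < size s) s`_i *: v i.

Lemma vsum_widen s N : (size s <= N)%N -> vsum s = \sum_(i < N) s`_i *: v i.
Proof.
move=> sN; rewrite /vsum (big_ord_widen _ (fun i => s`_i *: v i) sN) big_mkcond.
by apply: eq_bigr => i _; case: ltnP => // si; rewrite nth_default ?scale0r.
Qed.

Lemma vsum_eq s s' : (forall i, s`_i = s'`_i) -> vsum s = vsum s'.
Proof.
move=> ss'; rewrite (vsum_widen (leq_maxl (size s) (size s'))).
rewrite (vsum_widen (leq_maxr (size s) (size s'))).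
by apply: eq_bigr => i _; rewrite ss'.
Qed.

Lemma vsum_lin a s s' N : (maxn (size s) (size s') <= N)%N ->
  a *: vsum s + vsum s' = vsum (mkseq (fun i => a * s`_i + s'`_i) N).
Proof.
rewrite geq_max => /andP[sN s'N].
rewrite (vsum_widen sN) (vsum_widen s'N) (vsum_widen (eq_leq (size_mkseq _ _))).
rewrite scaler_sumr -big_split; apply: eq_bigr => i _.
by rewrite nth_mkseq // scalerA scalerDl.
Qed.

Lemma vsum_eq0 s : vsum s = 0 -> forall i, s`_i = 0.
Proof.
move=> s0 i; case: (ltnP i (size s)) => [ilt | si]; last exact: nth_default.
exact: (v_free (c := nth 0 s) s0).
Qed.

(* [W] need not contain 0, so that the empty chain meets the hypothesis of
   Zorn's lemma. *)
Definition avoids_span (W : set L) : Prop :=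
  (forall a x y, W x -> W y -> W (a *: x + y)) /\ (forall s, W (vsum s) -> vsum s = 0).

Lemma avoids_span_chain (F : set (set L)) :
  (F `<=` avoids_span)%classic -> total_on F subset ->
  avoids_span (\bigcup_(X in F) X)%classic.
Proof.
move=> Favoid Ftot; split=> [a x y [X FX Xx] [Y FY Yy] | s [X FX Xs]].
  have [XY | YX] := Ftot X Y FX FY.
    by exists Y => //; apply: (Favoid Y FY).1 => //; apply: XY.
  by exists X => //; apply: (Favoid X FX).1 => //; apply: YX.
exact: (Favoid X FX).2.
Qed.

Variable A : set L.
Hypothesis A_closed : forall a x y, A x -> A y -> A (a *: x + y).
Hypothesis A_meet : forall s, A (vsum s) -> vsum s = 0.
Hypothesis A_max : forall C, (A `<` C)%classic -> ~ avoids_span C.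

Lemma complement0 : A 0.
Proof.
have [[x Ax] | noA] := pselect (exists x, A x).
  by have := A_closed (-1) Ax Ax; rewrite scaleN1r addNr.
exfalso; apply: (A_max (C := [set 0]%classic)).
  split=> [x Ax | sub0]; first by case: noA; exists x.
  by apply: noA; exists 0; apply: sub0.
by split=> [a x y -> -> | s //]; rewrite scaler0 addr0.
Qed.

Lemma vsumZ a s : a *: vsum s = vsum [seq a * x | x <- s].
Proof.
rewrite /vsum size_map scaler_sumr; apply: eq_bigr => i _.
by rewrite (nth_map 0) // scalerA.
Qed.

Lemma decompose w : exists s a, A a /\ w = vsum s + a.
Proof.
apply: contrapT => noDec.
pose C : set L := fun y => exists a x, A x /\ y = a *: w + x.
apply: (A_max (C := C)).
  split=> [x Ax | CA]; first by exists 0, x; rewrite scale0r add0r.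
  apply: noDec; exists [::], w; split; last by rewrite /vsum big_ord0 add0r.
  by apply: CA; exists 1, 0; split; [exact: complement0 | rewrite scale1r addr0].
split=> [b _ _ [a1 [x1 [Ax1 ->]]] [a2 [x2 [Ax2 ->]]] | s [a [x [Ax sx]]]].
  exists (b * a1 + a2), (b *: x1 + x2); split; first exact: A_closed.
  by rewrite scalerDr scalerA addrACA -scalerDl.
have [a0 | a_neq0] := eqVneq a 0.
  by apply: A_meet; rewrite sx a0 scale0r add0r.
case: noDec; exists [seq a^-1 * y | y <- s], (- a^-1 *: x); split.
  by rewrite -[_ *: x]addr0; apply: A_closed => //; exact: complement0.
by rewrite -vsumZ sx scalerDr scalerA (mulVf a_neq0) scale1r scaleNr addrK.
Qed.

Lemma decompose_unique s a s' a' : A a -> A a' ->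
  vsum s + a = vsum s' + a' -> forall i, s`_i = s'`_i.
Proof.
move=> Aa Aa' e i; set N := maxn (maxn (size s') (size s)) i.+1.
have t0 : vsum (mkseq (fun j => -1 * s'`_j + s`_j) N) = 0.
  apply: A_meet; rewrite -vsum_lin ?leq_maxl //.
  have -> : -1 *: vsum s' + vsum s = -1 *: a + a'.
    by rewrite !scaleN1r -[vsum s](addrK a) e addrA addKr addrC.
  exact: A_closed.
move/(_ i): (vsum_eq0 t0); rewrite nth_mkseq ?leq_maxr // mulN1r addrC => /eqP.
by rewrite subr_eq0 => /eqP.
Qed.

Definition vcoefs (w : L) : seq K :=
  xget [::] (fun s => exists2 a, A a & w = vsum s + a).

Definition vcoef (i : nat) (w : L) : K := (vcoefs w)`_i.

Definition vsupp (w : L) : nat := size (vcoefs w).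

Lemma vcoefs_spec w : exists2 a, A a & w = vsum (vcoefs w) + a.
Proof.
have [s [a [Aa ew]]] := decompose w.
have dec_w : exists s, exists2 a, A a & w = vsum s + a by exists s, a.
exact: xgetPex dec_w.
Qed.

Lemma vcoefE s a i : A a -> vcoef i (vsum s + a) = s`_i.
Proof.
move=> Aa; have [a' Aa' e] := vcoefs_spec (vsum s + a).
exact: decompose_unique Aa' Aa (esym e) i.
Qed.

Lemma vcoef_vsum s i : vcoef i (vsum s) = s`_i.
Proof. by rewrite -[vsum s]addr0 vcoefE //; apply: complement0. Qed.

Lemma vcoef_supp i w : (vsupp w <= i)%N -> vcoef i w = 0.
Proof. exact: nth_default. Qed.

Lemma vcoef_lin i b x y : vcoef i (b *: x + y) = b * vcoef i x + vcoef i y.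
Proof.
have [ax Ax ex] := vcoefs_spec x; have [ay Ay ey] := vcoefs_spec y.
set N := maxn (maxn (vsupp x) (vsupp y)) i.+1.
have -> : b *: x + y =
    vsum (mkseq (fun j => b * (vcoefs x)`_j + (vcoefs y)`_j) N) + (b *: ax + ay).
  by rewrite -vsum_lin ?leq_maxl // {1}ex {1}ey scalerDr addrACA.
by rewrite vcoefE ?nth_mkseq ?leq_maxr //; apply: A_closed.
Qed.

Lemma vcoef_v i j : vcoef i (v j) = (i == j)%:R.
Proof.
set N := maxn j.+1 i.+1.
have -> : v j = vsum (mkseq (fun k => (k == j)%:R) N).
  have jN : (j < N)%N by rewrite leq_maxl.
  rewrite (vsum_widen (eq_leq (size_mkseq _ _))) (bigD1 (Ordinal jN)) //=.
  rewrite nth_mkseq // eqxx scale1r big1 ?addr0 // => k kj.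
  rewrite nth_mkseq //; case: eqP => [kj' | _]; last by rewrite scale0r.
  by case/eqP: kj; apply: val_inj.
by rewrite vcoef_vsum nth_mkseq ?leq_maxr.
Qed.

Lemma vsum_coef_inj s s' :
  (forall i, vcoef i (vsum s) = vcoef i (vsum s')) -> vsum s = vsum s'.
Proof. by move=> ss'; apply: vsum_eq => i; rewrite -!vcoef_vsum. Qed.

Lemma endo_of_coords (phi : nat -> L -> K) :
  (forall i a x y, phi i (a *: x + y) = a * phi i x + phi i y) ->
  (forall i w, (vsupp w <= i)%N -> phi i w = 0) ->
  exists2 D : L -> L, is_endo D & forall i w, vcoef i (D w) = phi i w.
Proof.
move=> phi_lin phi_supp; pose D w := vsum (mkseq (phi^~ w) (vsupp w)).
have vcoefD i w : vcoef i (D w) = phi i w.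
  rewrite vcoef_vsum; case: (ltnP i (vsupp w)) => [iw | wi]; first by rewrite nth_mkseq.
  by rewrite nth_default ?size_mkseq // phi_supp.
exists D => // a x y.
have [t et] : exists t, a *: D x + D y = vsum t by eexists; apply: vsum_lin (leqnn _).
rewrite et; apply: vsum_coef_inj => i.
by rewrite -et vcoef_lin !vcoefD phi_lin.
Qed.

Lemma no_bounded_basis (B : (L -> L) -> Prop) : ~ bounded_basis B.
Proof.
move=> [basisB [k bddB]].
pose e := matrix_unit v vcoef.
have endo_e m l : is_endo (e m l) by apply/matrix_unit_endo/vcoef_lin.
have [tau htau] := choice (fun m => endo_cs_le basisB (endo_e m m)).
pose d m := (tau m * m * k).+1.
have large m : exists c : 'I_(d m) -> K,
    forall N, cs_le B N (\sum_l c l *: e m (m + l)) -> (d m <= N)%N.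
  apply: (large_support basisB) => [l | c].
    exact: endo_spanned basisB (endo_e _ _).
  apply: (matrix_unit_free vcoef_lin vcoef_v) => i j /eqP.
  by rewrite eqn_add2l => /eqP /val_inj.
pose c m := sval (cid (large m)).
pose phi i w := \sum_(l < d i) c i l * vcoef (i + l) w.
have [D endoD vcoefD] : exists2 D, is_endo D & forall i w, vcoef i (D w) = phi i w.
  apply: endo_of_coords => [i a x y | i w iw].
    rewrite /phi mulr_sumr -big_split; apply: eq_bigr => l _.
    by rewrite vcoef_lin mulrDr mulrCA.
  rewrite /phi big1 // => l _.
  by rewrite vcoef_supp ?mulr0 // (leq_trans iw (leq_addr _ _)).
(* [d M] exceeds the bound of [cs_le_mul] on e M M o D, but e M M o D is the
   combination chosen for M. *)
have [M csD] := endo_cs_le basisB endoD.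
have := cs_le_mul basisB bddB (htau M) csD.
have -> : endo_mul (e M M) D = \sum_l c M l *: e M (M + l).
  apply/funext => w; rewrite /endo_mul /e /matrix_unit vcoefD /phi fct_sumE scaler_suml.
  by apply: eq_bigr => l _; rewrite scalrfctE /= scalerA.
by move=> /(svalP (cid (large M))); rewrite ltnn.
Qed.

End Complement.

Lemma infinite_dim_no_bounded_basis (K : fieldType) (L : lmodType K) :
  infinite_dim L -> ~ exists B, @bounded_basis K L B.
Proof.
move=> infL [B bddB].
have [A [[A_closed A_meet] A_max]] :=
  Zorn_bigcup (@avoids_span_chain K L (@free_seq K L)).
exact: no_bounded_basis (free_seq_free infL) _ A_closed A_meet A_max _ bddB.
Qed.

Theorem theorem5p7 (K : fieldType) (L : lmodType K) :
  (forall n : nat, (1 < n)%N -> has_dim L n ->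
     (exists B : (L -> L) -> Prop, @multiplicative_basis K L B) /\
     ~ (exists B : (L -> L) -> Prop, @strong_multiplicative_basis K L B)) /\
  (infinite_dim L -> ~ (exists B : (L -> L) -> Prop, @bounded_basis K L B)).
Proof.
split; last exact: infinite_dim_no_bounded_basis.
move=> n n_gt1 [u basis_u]; split.
  by exists (matrix_units u); apply: matrix_units_multiplicative.
exact: no_strong_multiplicative_basis basis_u n_gt1.
Qed.
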